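(* Let $\mathcal{A}=\{a_1,\ldots,a_m\}$ be a set of $m$ distinct positive integers, and let $\phi_{\mathcal{A},\mathbb{C}}:\mathbb{C}^n\to\mathbb{C}^m$, $x\mapsto(\sum_{i=1}^n x_i^{a_j})_{j=1,\ldots,m}$, with restrictions $\phi_{\mathcal{A},\mathbb{R}}:\mathbb{R}^n\to\mathbb{R}^m$ and $\phi_{\mathcal{A},\ge0}:\mathbb{R}^n_{\ge0}\to\mathbb{R}^m_{\ge0}$. Using the classical topology: (1) the constructible set $\mathrm{im}(\phi_{\mathcal{A},\mathbb{C}})$ is not closed in $\mathbb{C}^m$ in general (there exist $n,\mathcal{A}$ for which it is not closed); (2) if some $a_j$ is even, then the semialgebraic set $\mathrm{im}(\phi_{\mathcal{A},\mathbb{R}})$ is closed in $\mathbb{R}^m$; if all $a_j$ are odd, it is not closed in general (there exist such $n,\mathcal{A}$ for which it is not closed); (3) for every $n$ and $\mathcal{A}$, the semialgebraic set $\mathrm{im}(\phi_{\mathcal{A},\ge0})$ is closed in $\mathbb{R}^m_{\ge0}$. *)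

From HB Require Import structures.
From mathcomp Require Import all_boot all_order all_algebra.
From mathcomp Require Import complex.
From mathcomp Require Import all_classical all_reals all_analysis.
Set Implicit Arguments. Unset Strict Implicit. Unset Printing Implicit Defensive.
Import Order.TTheory GRing.Theory Num.Theory.
Import numFieldTopology.Exports numFieldNormedType.Exports.
Local Open Scope ring_scope.
Local Open Scope classical_set_scope.

Definition exponent_set (A : seq nat) : Prop := uniq A /\ all (fun a => 0 < a)%N A.

Definition phiA (K : nzRingType) (n : nat) (A : seq nat) (x : 'rV[K]_n)
  : 'rV[K]_(size A) :=
  \row_(j < size A) \sum_(i < n) (x 0 i) ^+ (nth 0%N A j).

Definition nonneg_orthant (R : realType) (n : nat) : set 'rV[R]_n :=
  [set x | forall i, 0 <= x 0 i].

(* Closedness of S relative to the subspace D (S a subset of D):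
   every point of D adherent to S lies in S. *)
Definition closed_in (T : topologicalType) (D S : set T) : Prop :=
  forall y, D y -> closure S y -> S y.

(* The complex numbers C = R[i] (with R a real closed field / the reals),
   viewed as a numFieldType so that it carries its norm (classical)
   topology |a + ib| = sqrt (a^2 + b^2); C^m gets the product topology. *)
Definition Cfield (R : realType) : numFieldType := R[i].
Arguments nonneg_orthant : clear implicits.

From HB Require Import structures.
From mathcomp Require Import all_boot all_order all_algebra.
From mathcomp Require Import complex.
From mathcomp Require Import all_classical all_reals all_analysis.
From mathcomp Require Import ring lra.
Set Implicit Arguments. Unset Strict Implicit. Unset Printing Implicit Defensive.
Import Order.TTheory GRing.Theory Num.Theory.
Import numFieldTopology.Exports numFieldNormedType.Exports.
Local Open Scope ring_scope.
Local Open Scope classical_set_scope.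

(* If some exponent a satisfies x_i^a >= 0 on the domain (a even, or the
   domain is the nonnegative orthant), then the a-th coordinate of phi_A(x)
   bounds every |x_i|.  Preimages of bounded sets are therefore bounded, so
   the continuous map phi_A is proper on its closed domain and has a closed
   image.  For A = {1, 3} and n = 2 the points (1/t, t^2 - 1/t) are mapped to
   (t^2, t^6 - 3t^3 + 3), which tends to (0, 3) as t -> 0; yet (0, 3) is not
   in the image, since x_1 + x_2 = 0 forces x_1^3 + x_2^3 = 0.  This works
   over R and over C alike. *)

Lemma horner_continuous (K : numFieldType) (q : {poly K}) : continuous (horner q).
Proof.
elim/poly_ind: q => [|q c IH].
  rewrite (_ : horner 0 = fun=> 0); first exact: cst_continuous.
  by apply/funext => x; rewrite horner0.
rewrite (_ : horner _ = horner q \* id + cst c); last first.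
  by apply/funext => x; rewrite /= hornerMXaddC.
move=> x; apply: continuousD; last exact: cst_continuous.
by apply: continuousM; [exact: IH | exact: cvg_id].
Qed.

Lemma continuous_sum (T : topologicalType) (K : numFieldType) (I : Type)
    (r : seq I) (g : I -> T -> K) :
  (forall i, continuous (g i)) -> continuous (fun x => \sum_(i <- r) g i x).
Proof.
move=> gc; elim: r => [|a r IH].
  under eq_fun do rewrite big_nil; exact: cst_continuous.
under eq_fun do rewrite big_cons.
by move=> x; apply: continuousD; [exact: gc | exact: IH].
Qed.

Lemma continuous_mx (T : topologicalType) (K : numFieldType) m n
    (f : T -> 'M[K]_(m, n)) :
  (forall i j, continuous (fun x => f x i j)) -> continuous f.
Proof.
move=> fc x B /= /nbhs_ballP [e e0 eB].
have : \forall z \near x, forall i j, ball (f x i j) e (f z i j).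
  apply: filter_forall => i; apply: filter_forall => j.
  exact: (fc i j x) (nbhsx_ballx _ _ e0).
by apply: filterS => z fz; apply: eB.
Qed.

Lemma closure_punctured_image (K : numFieldType) (T : topologicalType)
    (g : K -> T) (S : set T) (a : K) :
  {for a, continuous g} -> (forall x, x != a -> S (g x)) -> closure S (g a).
Proof.
move=> ga gS B /ga gB.
have /filter_ex [x [xa Bx]] : \forall x \near a^', x != a /\ B (g x).
  by apply: filterI; [exact: (nbhs_dnbhs_neq a) | exact: nbhs_dnbhs gB].
by exists (g x); split => //; exact: gS.
Qed.

Lemma closed_image_locally_proper (T U : topologicalType) (f : T -> U) (D : set T) :
  hausdorff_space U -> continuous f -> closed D ->
  (forall y : U, exists2 B, nbhs y B & exists2 C, compact C & D `&` f @^-1` B `<=` C) ->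
  closed (f @` D).
Proof.
move=> hU fc Dcl fproper y cly.
have [B By [C Cc DBC]] := fproper y.
have fCD_closed : closed (f @` (C `&` D)).
  apply: compact_closed hU _; apply: continuous_compact.
    exact: continuous_subspaceT.
  exact: compact_closedI.
suff [x [_ Dx] <-] : (f @` (C `&` D)) y by exists x.
apply: fCD_closed => V Vy.
have [_ [[x Dx <-] [Vfx Bfx]]] := cly _ (filterI Vy By).
by exists (f x); split => //; exists x => //; split => //; exact: DBC.
Qed.

Lemma phiA_continuous (K : numFieldType) n (A : seq nat) : continuous (@phiA K n A).
Proof.
apply: continuous_mx => i j; under eq_fun do rewrite mxE.
apply: continuous_sum => k; under eq_fun do rewrite -hornerXn; move=> x.
apply: (@continuous_comp _ _ _ (fun M : 'rV[K]_n => M 0 k) (horner 'X^(nth 0%N A j))).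
  exact: coord_continuous.
exact: horner_continuous.
Qed.

Definition phiA13_curve (K : numFieldType) (x : K) : 'rV[K]_2 :=
  \row_j ([:: 'X^2; 'X^6 - 3%:P * 'X^3 + 3%:P]`_j).[x].

Lemma phiA13_curve_continuous (K : numFieldType) : continuous (@phiA13_curve K).
Proof.
by apply: continuous_mx => i j; under eq_fun do rewrite mxE; exact: horner_continuous.
Qed.

Lemma phiA13_curveE (K : numFieldType) (x : K) : x != 0 ->
  @phiA K 2 [:: 1%N; 3%N] (\row_i [:: x^-1; x ^+ 2 - x^-1]`_i) = phiA13_curve x.
Proof.
move=> x0; apply/rowP => j; rewrite !mxE !big_ord_recl big_ord0 /= !mxE /= addr0.
by case: j => [[|[|//]]] ? /=; rewrite ?(hornerD, hornerN, hornerCM, hornerC, hornerXn); field.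
Qed.

Lemma phiA13_curve0_notin_range (K : numFieldType) :
  ~ range (@phiA K 2 [:: 1%N; 3%N]) (phiA13_curve 0).
Proof.
move=> [x _ /rowP xp]; have := xp (lift ord0 ord0); have := xp ord0.
rewrite !mxE !big_ord_recl !big_ord0 /= !addr0 !expr1.
rewrite ?(hornerD, hornerN, hornerCM, hornerC, hornerXn) => sum0.
set a := x 0 ord0; set b := x 0 (lift ord0 ord0) in sum0 *.
have -> : a ^+ 3 + b ^+ 3 = (a + b) * (a ^+ 2 - a * b + b ^+ 2) by ring.
by rewrite sum0 !expr0n /= mul0r mulr0 subr0 add0r => /eqP; rewrite eq_sym pnatr_eq0.
Qed.

Lemma phiA13_range_not_closed (K : numFieldType) :
  ~ closed (range (@phiA K 2 [:: 1%N; 3%N])).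
Proof.
have curve0_adh : closure (range (@phiA K 2 [:: 1%N; 3%N])) (phiA13_curve 0).
  apply: closure_punctured_image => [|x x0]; first exact: phiA13_curve_continuous.
  by rewrite -phiA13_curveE //; exists (\row_i [:: x^-1; x ^+ 2 - x^-1]`_i).
by move=> /(_ _ curve0_adh); exact: phiA13_curve0_notin_range.
Qed.

Lemma normr_le_power_sum (R : realDomainType) n a (x : 'I_n -> R) i :
  (0 < a)%N -> (forall k, 0 <= x k ^+ a) -> `|x i| <= 1 + \sum_k x k ^+ a.
Proof.
move=> a0 xa; have sum_ge0 : 0 <= \sum_k x k ^+ a by exact: sumr_ge0.
have [xi_le1|xi_gt1] := leP `|x i| 1; first by apply: le_trans xi_le1 _; rewrite lerDl.
apply: le_trans (ler_eXnr a0 (ltW xi_gt1)) _.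
rewrite -normrX ger0_norm // (bigD1 i) //= addrC addrA lerDr.
by rewrite addr_ge0 // sumr_ge0.
Qed.

Lemma phiA_image_closed (R : realType) n (A : seq nat) (D : set 'rV[R]_n) a :
  closed D -> a \in A -> (0 < a)%N -> (forall x, D x -> forall i, 0 <= x 0 i ^+ a) ->
  closed (@phiA R n A @` D).
Proof.
move=> Dcl aA a0 Da.
apply: closed_image_locally_proper (@norm_hausdorff _ _) (@phiA_continuous _ _ _) Dcl _.
move=> y; have jA : (index a A < size A)%N by rewrite index_mem.
pose j := Ordinal jA; pose M := `|y 0 j| + 2.
exists (ball y 1); first exact: nbhsx_ballx.
exists [set v : 'rV[R]_n | forall i, (fun=> `[- M, M]%classic) i (v ord0 i)].
  exact: rV_compact (fun=> @segment_compact R (- M) M).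
move=> x [Dx /= yx] i.
have := normr_le_power_sum i a0 (Da x Dx).
have : `|y 0 j - @phiA R n A x 0 j| < 1 by have := yx.2 0 j.
rewrite mxE nth_index // ltr_distlC => /andP[_ sum_lt].
have := ler_norm (y 0 j); rewrite /= in_itv /= -ler_norml /M; lra.
Qed.

Lemma nonneg_orthant_closed (R : realType) n : closed (nonneg_orthant R n).
Proof.
rewrite (_ : nonneg_orthant R n = \bigcap_i ((fun x : 'rV[R]_n => x 0 i) @^-1` [set r | 0 <= r])).
  apply: closed_bigI => i _; apply: preimage_closed; last exact: closed_ge.
  by move=> x _; exact: coord_continuous.
by apply/seteqP; split => x /= x_ge0 i; [move=> _ | ]; exact: x_ge0.
Qed.

Lemma phiA_range_closed_even (R : realType) n (A : seq nat) :
  all (fun a => 0 < a)%N A -> has (fun a => ~~ odd a) A -> closed (range (@phiA R n A)).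
Proof.
move=> /allP A_gt0 /hasP [a aA a_even].
apply: (phiA_image_closed closedT aA (A_gt0 a aA)) => x _ i.
exact: exprn_even_ge0.
Qed.

Lemma phiA_orthant_image_closed (R : realType) n (A : seq nat) :
  all (fun a => 0 < a)%N A ->
  closed_in (nonneg_orthant R (size A)) (@phiA R n A @` nonneg_orthant R n).
Proof.
case: A => [_ y _ _ | a A /andP [a_gt0 _] y _].
  by exists 0; [move=> i; rewrite mxE | apply/rowP => -[]].
suff : closed (@phiA R n (a :: A) @` nonneg_orthant R n) by exact.
apply: (phiA_image_closed (@nonneg_orthant_closed R n) (mem_head a A) a_gt0).
by move=> x x_ge0 i; exact: exprn_ge0.
Qed.

Theorem proposition4p1 (R : realType) :
  (* (1) the complex image is not closed in general *)
  (exists (n : nat) (A : seq nat), exponent_set A /\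
     ~ closed (range (@phiA (Cfield R) n A)))
  /\
  (* (2a) if some exponent is even, the real image is closed *)
  (forall (n : nat) (A : seq nat), exponent_set A ->
     has (fun a => ~~ odd a) A -> closed (range (@phiA R n A)))
  /\
  (* (2b) with all exponents odd, the real image is not closed in general *)
  (exists (n : nat) (A : seq nat), exponent_set A /\ all odd A /\
     ~ closed (range (@phiA R n A)))
  /\
  (* (3) the image of the nonnegative orthant is closed in R^m_{>=0} *)
  (forall (n : nat) (A : seq nat), exponent_set A ->
     closed_in (nonneg_orthant R (size A))
               (@phiA R n A @` nonneg_orthant R n)).
Proof.
split; [|split; [|split]].
- by exists 2%N, [:: 1%N; 3%N]; split; last exact: phiA13_range_not_closed.
- by move=> n A [_ A_gt0]; exact: phiA_range_closed_even.
- by exists 2%N, [:: 1%N; 3%N]; do !split; exact: phiA13_range_not_closed.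
- by move=> n A [_ A_gt0]; exact: phiA_orthant_image_closed.
Qed.
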